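(* Let $S$ be a semigroup and let $\mathrm{Pr}(S)$ be its predicatization. Then every direct power $\Pi\mathrm{Pr}(S)=\prod_{i\in I}\mathrm{Pr}(S)$ is $\mathcal{L}_{s\text{-}pred}(\Pi S)$-equationally Noetherian if and only if $S$ satisfies both quasi-identities $$\forall a\,\forall b\,\forall \alpha\,\forall\beta\ \big((a\alpha=a\beta)\to(b\alpha=b\beta)\big),$$ $$\forall a\,\forall b\,\forall \alpha\,\forall\beta\ \big((\alpha a=\beta a)\to(\alpha b=\beta b)\big).$$
   Context: The language $\mathcal{L}_{s\text{-}pred}=\{M\}$ has a single ternary relation symbol. The predicatization $\mathrm{Pr}(S)$ of a semigroup $S$ is the $\mathcal{L}_{s\text{-}pred}$-structure with universe $S$ in which $M(x,y,z)$ holds iff $xy=z$. The direct power $\prod_{i\in I}\mathrm{Pr}(S)$ consists of all sequences $[a_i\mid i\in I]$ with $M$ holding coordinatewise. $\mathcal{L}_{s\text{-}pred}(\Pi S)$ is the language extended by a constant symbol for every element of the direct power. An equation is an atomic formula of this language ($M(t_1,t_2,t_3)$ or $t_1=t_2$, each $t_k$ a variable or a constant); a system is any set of equations in a fixed finite set of variables $x_1,\dots,x_n$; two systems are equivalent if they have the same set of solutions in the structure. A structure is $\mathcal{L}_{s\text{-}pred}(\Pi S)$-equationally Noetherian if every such system is equivalent over it to a finite subsystem. *)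

From mathcomp Require Import all_boot.
Set Implicit Arguments. Unset Strict Implicit. Unset Printing Implicit Defensive.

Definition associative_op (S : Type) (mul : S -> S -> S) : Prop :=
  forall x y z, mul x (mul y z) = mul (mul x y) z.

Definition power (I S : Type) := I -> S.

(* The relation M interpreted in the direct power: coordinatewise xy = z. *)
Definition powM (I S : Type) (mul : S -> S -> S) (x y z : power I S) : Prop :=
  forall i, mul (x i) (y i) = z i.

(* Terms of L_{s-pred}(Pi S) in the variables x_1..x_n:
   a variable, or a constant symbol naming an element of the direct power. *)
Inductive term (C : Type) (n : nat) : Type :=
  | TVar of 'I_n
  | TCst of C.

Inductive equation (C : Type) (n : nat) : Type :=
  | EqM of term C n & term C n & term C n
  | EqEq of term C n & term C n.

Definition eval_term (I S : Type) (n : nat) (v : 'I_n -> power I S)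
  (t : term (power I S) n) : power I S :=
  match t with TVar k => v k | TCst c => c end.

Definition sat_eq (I S : Type) (mul : S -> S -> S) (n : nat)
  (v : 'I_n -> power I S) (e : equation (power I S) n) : Prop :=
  match e with
  | EqM t1 t2 t3 => powM mul (eval_term v t1) (eval_term v t2) (eval_term v t3)
  | EqEq t1 t2 => eval_term v t1 = eval_term v t2
  end.

Definition solution (I S : Type) (mul : S -> S -> S) (n : nat)
  (E : equation (power I S) n -> Prop) (v : 'I_n -> power I S) : Prop :=
  forall e, E e -> sat_eq mul v e.

Fixpoint In_seq (A : Type) (a : A) (l : seq A) : Prop :=
  match l with [::] => False | b :: l' => b = a \/ In_seq a l' end.

Definition power_eq_noetherian (I S : Type) (mul : S -> S -> S) : Prop :=
  forall (n : nat) (E : equation (power I S) n -> Prop),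
    exists l : seq (equation (power I S) n),
      (forall e, In_seq e l -> E e) /\
      (forall v : 'I_n -> power I S,
          solution mul E v <-> solution mul (fun e => In_seq e l) v).

(* Call the first quasi-identity left uniformity (all left multiplications of S
   have the same kernel) and the second right uniformity.  Being Horn sentences,
   both pass from S to the direct power with the pointwise product.  The shape of
   an equation records which variable, if any, occupies each position.  Under the
   two laws, equations of the same shape with a common solution have the same
   solutions: the constants in the remaining positions can be traded for one
   another.  So within one shape a system is equivalent to one of its equations,
   or to two of them without a common solution, and there are finitely many shapes.
   Conversely, if a alpha = a beta but b alpha <> b beta, index the power by nat and
   let c_k be b at k and a elsewhere: the assignment equal to beta at N and to alpha
   elsewhere solves every equation c_k x = c_k alpha except the N-th, so no finite
   subsystem is equivalent to the whole system.  Right uniformity follows by passing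
   to the opposite product. *)

From mathcomp Require Import all_boot.
From Stdlib Require Import Classical FunctionalExtensionality.
Set Implicit Arguments. Unset Strict Implicit. Unset Printing Implicit Defensive.

Definition uniform_left_kernel (T : Type) (mul : T -> T -> T) : Prop :=
  forall a b alpha beta, mul a alpha = mul a beta -> mul b alpha = mul b beta.

Definition uniform_right_kernel (T : Type) (mul : T -> T -> T) : Prop :=
  forall a b alpha beta, mul alpha a = mul beta a -> mul alpha b = mul beta b.

Lemma In_seq_cat A (a : A) l1 l2 : In_seq a (l1 ++ l2) <-> In_seq a l1 \/ In_seq a l2.
Proof. by elim: l1 => [|b l1 IHl1] /=; [tauto | rewrite IHl1; tauto]. Qed.

Lemma In_seq_map_involutive A (f : A -> A) (fK : involutive f) x l :
  In_seq x (map f l) <-> In_seq (f x) l.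
Proof.
elim: l => [|a l IHl] //=; rewrite IHl.
by split=> [[<-|]|[->|]]; rewrite ?fK; auto.
Qed.

Lemma In_seq_bounded A (f : nat -> A) l :
  (forall x, In_seq x l -> exists k, x = f k) ->
  exists N, forall x, In_seq x l -> exists2 k, k < N & x = f k.
Proof.
elim: l => [|a l IHl] lf; first by exists 0.
have [N lN] := IHl (fun x lx => lf x (or_intror lx)).
have [k ->] := lf a (or_introl erefl).
exists (maxn N k.+1) => x /= [<-|/lN [j ltjN ->]].
  by exists k; rewrite // leq_max ltnSn orbT.
by exists j; rewrite // leq_max ltjN.
Qed.

Section Magma.

Variables (T : Type) (mul : T -> T -> T).

Definition eval n (w : 'I_n -> T) (t : term T n) : T :=
  match t with TVar k => w k | TCst c => c end.

Definition holds n (w : 'I_n -> T) (e : equation T n) : Prop :=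
  match e with
  | EqM t1 t2 t3 => mul (eval w t1) (eval w t2) = eval w t3
  | EqEq t1 t2 => eval w t1 = eval w t2
  end.

End Magma.

Definition term_shape C n (t : term C n) : option 'I_n :=
  match t with TVar k => Some k | TCst _ => None end.

Definition equation_shape C n (e : equation C n) :=
  match e with
  | EqM t1 t2 t3 => inl (term_shape t1, term_shape t2, term_shape t3)
  | EqEq t1 t2 => inr (term_shape t1, term_shape t2)
  end.

Lemma term_shape_eq_cases C n (t s : term C n) :
  term_shape t = term_shape s -> t = s \/ exists c d, t = TCst n c /\ s = TCst n d.
Proof.
case: t => [k|c]; case: s => [k'|d] //=; first by case=> ->; left.
by right; exists c, d.
Qed.

Lemma holds_same_shape T (mul : T -> T -> T) n (e e' : equation T n) (w u : 'I_n -> T) :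
  uniform_left_kernel mul -> uniform_right_kernel mul ->
  equation_shape e = equation_shape e' ->
  holds mul w e -> holds mul w e' -> holds mul u e -> holds mul u e'.
Proof.
move=> Q1 Q2.
case: e e' => [t1 t2 t3|t1 t2] [s1 s2 s3|s1 s2] //= [].
  move=> /term_shape_eq_cases [<-|[c1 [d1 [-> ->]]]]
         /term_shape_eq_cases [<-|[c2 [d2 [-> ->]]]]
         /term_shape_eq_cases [<-|[c3 [d3 [-> ->]]]] /=.
  - by [].
  - by congruence.
  - move=> Hw Hw' <-; symmetry; apply: (Q1 (eval w t1)); by rewrite Hw Hw'.
  - move=> Hw <- Hu; symmetry; apply: (Q2 c2); by rewrite Hw Hu.
  - move=> Hw Hw' <-; symmetry; apply: (Q2 (eval w t2)); by rewrite Hw Hw'.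
  - move=> Hw <- Hu; symmetry; apply: (Q1 c1); by rewrite Hw Hu.
  - by congruence.
  - by congruence.
by move=> /term_shape_eq_cases [<-|[c1 [d1 [-> ->]]]]
          /term_shape_eq_cases [<-|[c2 [d2 [-> ->]]]] /=; congruence.
Qed.

Section DirectPower.

Variables (I S : Type) (mul : S -> S -> S).

Definition pmul (x y : power I S) : power I S := fun i => mul (x i) (y i).

Lemma powM_pmul (x y z : power I S) : powM mul x y z <-> pmul x y = z.
Proof. by split=> [xyz|<- //]; apply: functional_extensionality. Qed.

Lemma sat_eq_holds n (v : 'I_n -> power I S) e : sat_eq mul v e <-> holds pmul v e.
Proof. by case: e => [t1 t2 t3|t1 t2] //=; apply: powM_pmul. Qed.

Lemma uniform_left_kernel_pmul : uniform_left_kernel mul -> uniform_left_kernel pmul.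
Proof.
move=> Q1 a b alpha beta aab; apply: functional_extensionality => i.
exact: (Q1 (a i)) (congr1 (@^~ i) aab).
Qed.

Lemma uniform_right_kernel_pmul : uniform_right_kernel mul -> uniform_right_kernel pmul.
Proof.
move=> Q2 a b alpha beta aab; apply: functional_extensionality => i.
exact: (Q2 (a i)) (congr1 (@^~ i) aab).
Qed.

Definition finitely_reducible n (E : equation (power I S) n -> Prop) : Prop :=
  exists l : seq (equation (power I S) n),
    (forall e, In_seq e l -> E e) /\
    (forall v, solution mul E v <-> solution mul (fun e => In_seq e l) v).

Lemma solution_ext n (E F : equation (power I S) n -> Prop) v :
  (forall e, E e <-> F e) -> solution mul E v <-> solution mul F v.
Proof. by move=> EF; split=> sol e /EF; apply: sol. Qed.

Lemma finitely_reducible_ext n (E F : equation (power I S) n -> Prop) :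
  (forall e, E e <-> F e) -> finitely_reducible E -> finitely_reducible F.
Proof.
move=> EF [l [lE El]]; exists l; split=> [e /lE /EF //|v].
by rewrite -(solution_ext v EF).
Qed.

Lemma finitely_reducible0 n : finitely_reducible (fun _ : equation (power I S) n => False).
Proof. by exists [::]. Qed.

Lemma finitely_reducibleU n (E F : equation (power I S) n -> Prop) :
  finitely_reducible E -> finitely_reducible F -> finitely_reducible (fun e => E e \/ F e).
Proof.
move=> [l1 [l1E El1]] [l2 [l2F Fl2]]; exists (l1 ++ l2); split.
  by move=> e /In_seq_cat [/l1E|/l2F]; [left|right].
move=> v; split=> [sol e /In_seq_cat [e1|e2]|sol e [Ee|Fe]].
- by apply: (El1 v).1 e e1 => e' ?; apply: sol; left.
- by apply: (Fl2 v).1 e e2 => e' ?; apply: sol; right.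
- by apply: (El1 v).2 e Ee => e' ?; apply: sol; apply/In_seq_cat; left.
- by apply: (Fl2 v).2 e Fe => e' ?; apply: sol; apply/In_seq_cat; right.
Qed.

Lemma finitely_reducible_partition n (K : finType) (f : equation (power I S) n -> K)
    (E : equation (power I S) n -> Prop) :
  (forall k, finitely_reducible (fun e => E e /\ f e = k)) -> finitely_reducible E.
Proof.
move=> Efib.
suff /(_ (enum K)) : forall s : seq K, finitely_reducible (fun e => E e /\ f e \in s).
  by apply: finitely_reducible_ext => e; rewrite mem_enum; split=> [[]|].
elim=> [|k s IHs].
  by apply: finitely_reducible_ext (@finitely_reducible0 n) => e; split=> [[]|[]].
apply: finitely_reducible_ext (finitely_reducibleU (Efib k) IHs) => e.
by rewrite in_cons; split=> [[[Ee ->]|[Ee ->]]|[Ee /orP [/eqP|]]]; rewrite ?eqxx ?orbT; auto.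
Qed.

Lemma finitely_reducible_same_shape n (F : equation (power I S) n -> Prop) :
  uniform_left_kernel mul -> uniform_right_kernel mul ->
  (forall e e', F e -> F e' -> equation_shape e = equation_shape e') ->
  finitely_reducible F.
Proof.
move=> Q1 Q2 Fsh.
have [[e0 Fe0]|noF] := classic (exists e, F e); last first.
  apply: finitely_reducible_ext (@finitely_reducible0 n) => e.
  by split=> // Fe; apply: noF; exists e.
have [[v [ve0 [e1 [Fe1 ve1]]]]|e0F] :=
  classic (exists v, sat_eq mul v e0 /\ exists e1, F e1 /\ ~ sat_eq mul v e1); last first.
  exists [:: e0]; split=> [e [<-|[]] //|v].
  split=> [sol e [<-|[]] //|sol e Fe]; first exact: sol.
  apply: NNPP => ve; apply: e0F; exists v; split; [by apply: sol; left | by exists e].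
(* A common solution u of e0 and e1 would force v to solve e1. *)
exists [:: e0; e1]; split=> [e [<-|[<-|[]]] //|u].
split=> [sol e [<-|[<-|[]]] //|sol]; [exact: sol..|].
have ue0 : holds pmul u e0 by apply/sat_eq_holds/sol; left.
have ue1 : holds pmul u e1 by apply/sat_eq_holds/sol; right; left.
case: ve1; apply/sat_eq_holds; move/sat_eq_holds: ve0.
exact: (holds_same_shape (uniform_left_kernel_pmul Q1) (uniform_right_kernel_pmul Q2)
          (Fsh _ _ Fe0 Fe1) ue0 ue1).
Qed.

Lemma power_noetherian_of_uniform_kernels :
  uniform_left_kernel mul -> uniform_right_kernel mul -> power_eq_noetherian I mul.
Proof.
move=> Q1 Q2 n E.
apply: (finitely_reducible_partition (f := @equation_shape _ n)) => sh.
by apply: finitely_reducible_same_shape => // e e' [_ ->] [_ ->].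
Qed.

End DirectPower.


Lemma not_finitely_reducible_chain I S (mul : S -> S -> S) n
    (e : nat -> equation (power I S) n) :
  (forall N, exists v, (forall k, k < N -> sat_eq mul v (e k)) /\ ~ sat_eq mul v (e N)) ->
  ~ finitely_reducible mul (fun x => exists k, x = e k).
Proof.
move=> chain [l [lE El]].
have [N lN] := In_seq_bounded lE.
have [v [ve ve_N]] := chain N; apply: ve_N.
apply: (El v).2; last by exists N.
by move=> x /lN [k ltkN ->]; apply: ve.
Qed.

Lemma uniform_left_kernel_of_power_noetherian S (mul : S -> S -> S) :
  power_eq_noetherian nat mul -> uniform_left_kernel mul.
Proof.
move=> noeth a b alpha beta aab; apply: NNPP => bab.
pose spike (k : nat) (x y : S) : power nat S := fun i => if i == k then x else y.
pose e k : equation (power nat S) 1 :=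
  EqM (TCst 1 (spike k b a)) (TVar (power nat S) ord0)
      (TCst 1 (spike k (mul b alpha) (mul a alpha))).
apply: (@not_finitely_reducible_chain _ _ mul _ e) (noeth 1 _) => N.
exists (fun _ => spike N beta alpha); split=> [k ltkN i|/(_ N)] /=; rewrite /spike.
  case: (i =P k) => [->|_]; first by rewrite ltn_eqF.
  by case: (i == N); rewrite ?aab.
by rewrite !eqxx => /esym.
Qed.

Definition flip_equation C n (e : equation C n) : equation C n :=
  match e with
  | EqM t1 t2 t3 => EqM t2 t1 t3
  | EqEq t1 t2 => EqEq t1 t2
  end.

Lemma flip_equationK C n : involutive (@flip_equation C n).
Proof. by case. Qed.


Section Opposite.

Variables (I S : Type) (mul : S -> S -> S).

Let mulop (x y : S) := mul y x.

Lemma sat_eq_flip n (v : 'I_n -> power I S) e :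
  sat_eq mulop v (flip_equation e) = sat_eq mul v e.
Proof. by case: e. Qed.

Lemma solution_flip n (E : equation (power I S) n -> Prop) v :
  solution mulop E v <-> solution mul (fun e => E (flip_equation e)) v.
Proof.
split=> sol e Ee; first by rewrite -sat_eq_flip; apply: sol.
by rewrite -[e]flip_equationK sat_eq_flip; apply: sol; rewrite flip_equationK.
Qed.

Lemma power_noetherian_op : power_eq_noetherian I mul -> power_eq_noetherian I mulop.
Proof.
move=> noeth n E; have [l [lE El]] := noeth n (fun e => E (flip_equation e)).
exists (map (@flip_equation _ n) l); split.
  by move=> e /(In_seq_map_involutive (@flip_equationK _ n)) /lE; rewrite flip_equationK.
move=> v; rewrite !solution_flip El.
apply: solution_ext => e.
by rewrite (In_seq_map_involutive (@flip_equationK _ n)) flip_equationK.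
Qed.

End Opposite.

Theorem theorem1 (S : Type) (mul : S -> S -> S) (assoc : associative_op mul) :
  (forall I : Type, power_eq_noetherian I mul) <->
  ((forall a b alpha beta : S,
       mul a alpha = mul a beta -> mul b alpha = mul b beta) /\
   (forall a b alpha beta : S,
       mul alpha a = mul beta a -> mul alpha b = mul beta b)).
Proof.
split=> [noeth|[Q1 Q2] I]; last exact: power_noetherian_of_uniform_kernels.
split; first exact: uniform_left_kernel_of_power_noetherian.
exact: uniform_left_kernel_of_power_noetherian (power_noetherian_op (noeth nat)).
Qed.
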